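(* Let $N=6$, $k=3$, $T=2$, $p_{11}=0.3$, $p_{01}=0.5$ (so $p_{11}<p_{01}$), and initial beliefs $(\omega_1,\dots,\omega_6)=(0.99,0.5,0.4,0.39,0.25,0.25)$. Consider the policy that senses channels $\{1,2,4\}$ in slot $1$ and, in slot $2$, senses three channels with the largest updated beliefs. Its expected total reward over the two slots is strictly larger than that of the myopic sensing policy, which senses $\{1,2,3\}$ in slot $1$ and three channels with the largest updated beliefs in slot $2$. In particular, the myopic sensing policy is not optimal in this instance.
   Context: Opportunistic spectrum access model. There are $N$ channels. The state $S_i(t)\in\{0,1\}$ of channel $i$ in slot $t$ (0 = busy, 1 = idle) evolves as a two-state discrete-time Markov chain with transition probabilities $p_{ij}=\Pr(S_i(t+1)=j\mid S_i(t)=i)$. The chains are independent across channels and all have the same transition probabilities $p_{01},p_{11}$. The initial states are independent with $\Pr(S_i(1)=1)=\omega_i$. In each slot, a user senses a set of exactly $k$ channels, chosen based on past actions and observations. It observes their states and obtains reward $1$ if at least one sensed channel is idle, and reward $0$ otherwise. The objective is the expected total reward over $T$ slots. Beliefs $\omega_i(t)$ (conditional probability that channel $i$ is idle in slot $t$) update as follows: $\omega_i(t+1)=p_{11}$ if $i$ was sensed and found idle; $\omega_i(t+1)=p_{01}$ if $i$ was sensed and found busy; and $\omega_i(t+1)=\tau(\omega_i(t))$ if $i$ was not sensed, where $\tau(\omega)=\omega p_{11}+(1-\omega)p_{01}$. The myopic sensing policy senses, in each slot, $k$ channels with the largest current beliefs. A policy is optimal if it maximizes the expected total reward. *)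

From HB Require Import structures.
From mathcomp Require Import all_boot all_order all_algebra.
Set Implicit Arguments. Unset Strict Implicit. Unset Printing Implicit Defensive.
Import Order.TTheory GRing.Theory Num.Theory.
Local Open Scope ring_scope.

Section OSA.
Variable N : nat.

(* channel states in one slot: true = idle (1), false = busy (0) *)
Definition state := {ffun 'I_N -> bool}.
Definition obs := {ffun 'I_N -> option bool}.
Definition beliefs := 'I_N -> rat.

Definition tau (p01 p11 w : rat) : rat := w * p11 + (1 - w) * p01.

Definition prob_state (w : beliefs) (s : state) : rat :=
  \prod_(i < N) (if s i then w i else 1 - w i).

Definition observe (A : {set 'I_N}) (s : state) : obs :=
  [ffun i => if i \in A then Some (s i) else None].

Definition update (p01 p11 : rat) (w : beliefs) (A : {set 'I_N}) (s : state)
  : beliefs :=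
  fun i => if i \in A then (if s i then p11 else p01) else tau p01 p11 (w i).

Definition exp_reward (w : beliefs) (B : {set 'I_N}) : rat :=
  1 - \prod_(j in B) (1 - w j).

Definition is_policy (k : nat) (A : {set 'I_N}) (f : obs -> {set 'I_N}) : Prop :=
  #|A| = k /\ forall o, #|f o| = k.

Definition value (p01 p11 : rat) (w : beliefs) (A : {set 'I_N})
  (f : obs -> {set 'I_N}) : rat :=
  \sum_(s : state) prob_state w s *
     ((([exists i in A, s i]) : bool)%:R
      + exp_reward (update p01 p11 w A s) (f (observe A s))).

Definition optimal (k : nat) (p01 p11 : rat) (w : beliefs) (A : {set 'I_N})
  (f : obs -> {set 'I_N}) : Prop :=
  is_policy k A f /\
  forall A' f', is_policy k A' f' -> value p01 p11 w A' f' <= value p01 p11 w A f.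

Definition topk (k : nat) (w : beliefs) (B : {set 'I_N}) : Prop :=
  #|B| = k /\ forall i j, i \in B -> j \notin B -> w j <= w i.

Definition topk_rule (k : nat) (p01 p11 : rat) (w : beliefs) (A : {set 'I_N})
  (f : obs -> {set 'I_N}) : Prop :=
  (forall o, #|f o| = k) /\
  forall s : state, topk k (update p01 p11 w A s) (f (observe A s)).

Definition myopic (k : nat) (p01 p11 : rat) (w : beliefs) (A : {set 'I_N})
  (f : obs -> {set 'I_N}) : Prop :=
  topk k w A /\ topk_rule k p01 p11 w A f.

End OSA.

(* The instance: N = 6, channels 1..6 are ordinals 0..5. *)
Definition ch (i : nat) : 'I_6 := inord i.-1.
Definition w0 : 'I_6 -> rat :=
  fun i => nth 0 [:: 99/100; 1/2; 4/10; 39/100; 1/4; 1/4] i.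
Definition p11_0 : rat := 3/10.
Definition p01_0 : rat := 1/2.
Definition A124 : {set 'I_6} := [set ch 1; ch 2; ch 4].
Definition A123 : {set 'I_6} := [set ch 1; ch 2; ch 3].

From HB Require Import structures.
From mathcomp Require Import all_boot all_order all_algebra lra.
Set Implicit Arguments. Unset Strict Implicit. Unset Printing Implicit Defensive.
Import Order.TTheory GRing.Theory Num.Theory.
Local Open Scope ring_scope.

(* Any two sets of k channels with the largest beliefs have the same expected
   reward: every element of their symmetric difference carries the same belief.
   So all top-k slot-2 rules give a policy the same value, and it suffices to
   evaluate one.  Since p11 < p01, the posterior ranking is explicit: channels
   found busy (belief p01) come first, then unsensed channels by increasing
   prior belief (tau is decreasing), then channels found idle (belief p11).
   Taking the first k channels of this list gives a top-k rule whose miss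
   probability has a closed form, and summing over the 64 channel states yields
   720824/390625 ~ 1.845309 for the myopic policy against
   369065763/200000000 ~ 1.845329 for sensing {1, 2, 4} first.  The myopic
   slot-1 set is forced to be {1, 2, 3}, whose beliefs strictly exceed the
   others. *)

Section TopSets.
Variables (T : finType) (disp : Order.disp_t) (O : porderType disp).
Implicit Types (u : T -> O) (A B C : {set T}).

Definition top_set u B := forall i j, i \in B -> j \notin B -> (u j <= u i)%O.

Lemma cardsD_sym A B : #|A| = #|B| -> #|A :\: B| = #|B :\: A|.
Proof. by move=> AB; rewrite !cardsD AB setIC. Qed.

Lemma top_set_swap u B C i j : top_set u B -> top_set u C ->
  i \in B :\: C -> j \in C :\: B -> u i = u j.
Proof.
move=> topB topC; rewrite !inE => /andP[iNC iB] /andP[jNB jC].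
by apply/le_anti; rewrite (topC j i jC iNC) (topB i j iB jNB).
Qed.

Lemma eq_prod_top_sets (R : comPzSemiRingType) (g : O -> R) u B C :
  #|B| = #|C| -> top_set u B -> top_set u C ->
  \prod_(j in B) g (u j) = \prod_(j in C) g (u j).
Proof.
move=> BC topB topC; rewrite (big_setID C) [RHS](big_setID B) setIC; congr (_ * _).
have DE := cardsD_sym BC.
have [D0|[i iD]] := set_0Vmem (B :\: C).
  have E0 : C :\: B = set0 by apply/eqP; rewrite -cards_eq0 -DE D0 cards0.
  by rewrite D0 E0 !big_set0.
have [j jE] : exists j, j \in C :\: B.
  by apply/card_gt0P; rewrite -DE; apply/card_gt0P; exists i.
rewrite (eq_bigr (fun=> g (u j))); last first.
  by move=> x xD; rewrite (top_set_swap topB topC xD jE).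
rewrite [RHS](eq_bigr (fun=> g (u j))); last first.
  by move=> y yE; rewrite -(top_set_swap topB topC iD yE) (top_set_swap topB topC iD jE).
by rewrite !prodr_const DE.
Qed.

Lemma top_set_eq u A B : #|A| = #|B| -> top_set u A ->
  (forall i j, i \in B -> j \notin B -> (u j < u i)%O) -> A = B.
Proof.
move=> AB topA strictB; apply/setP/subset_cardP => //; apply/subsetP => j jA.
apply/negPn/negP => jNB.
have [i] : exists i, i \in B :\: A.
  by apply/card_gt0P; rewrite -(cardsD_sym AB); apply/card_gt0P; exists j; rewrite inE jNB.
rewrite inE => /andP[iNA iB].
by move: (strictB i j iB jNB); rewrite (le_gtF (topA j i jA iNA)).
Qed.

End TopSets.

Lemma sorted_take_drop (T : eqType) (r : rel T) (s : seq T) n x y :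
  transitive r -> sorted r s -> x \in take n s -> y \in drop n s -> r x y.
Proof.
move=> r_tr; rewrite sorted_pairwise // -[s in pairwise _ s](cat_take_drop n) pairwise_cat.
by case/and3P => /allrelP rs _ _; apply: rs.
Qed.

Lemma exp_reward_topk N k (w : beliefs N) B C :
  topk k w B -> topk k w C -> exp_reward w B = exp_reward w C.
Proof.
move=> [cB topB] [cC topC]; rewrite /exp_reward.
by rewrite (eq_prod_top_sets (fun x : rat => 1 - x) (etrans cB (esym cC)) topB topC).
Qed.

Lemma value_topk_rule N k p01 p11 (w : beliefs N) A f g :
  topk_rule k p01 p11 w A f -> topk_rule k p01 p11 w A g ->
  value p01 p11 w A f = value p01 p11 w A g.
Proof.
move=> [_ topf] [_ topg]; apply: eq_bigr => s _.
by rewrite (exp_reward_topk (topf s) (topg s)).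
Qed.

Lemma tau_le_p01 p01 p11 x : p11 <= p01 -> 0 <= x -> tau p01 p11 x <= p01.
Proof.
move=> le_p x_ge0; have : 0 <= x * (p01 - p11) by rewrite mulr_ge0 // subr_ge0.
rewrite /tau; lra.
Qed.

Lemma tau_le_tau p01 p11 x y : p11 <= p01 -> x <= y -> tau p01 p11 y <= tau p01 p11 x.
Proof.
move=> le_p le_xy; have : 0 <= (y - x) * (p01 - p11) by rewrite mulr_ge0 // subr_ge0.
rewrite /tau; lra.
Qed.

Lemma p11_le_tau p01 p11 x : p11 <= p01 -> x <= 1 -> p11 <= tau p01 p11 x.
Proof.
move=> le_p x_le1; have : 0 <= (1 - x) * (p01 - p11) by rewrite mulr_ge0 // !subr_ge0.
rewrite /tau; lra.
Qed.

Section RankRule.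
Variables (N k : nat) (p01 p11 : rat) (w : beliefs N) (sl fl : seq 'I_N).

(* An unobserved channel counts as busy, so that the rule senses k channels on
   every observation, not only on those produced by [observe]. *)
Definition rank_list (o : obs N) : seq 'I_N :=
  take k ([seq i <- sl | o i != Some true] ++ fl).

Definition rank_rule (o : obs N) : {set 'I_N} := [set i in rank_list o].

Definition slot2_miss (s : 'I_N -> bool) : rat :=
  \prod_(x <- take k ([seq 1 - p01 | i <- sl & ~~ s i]
                      ++ [seq 1 - tau p01 p11 (w i) | i <- fl])) x.

Definition rank_value : rat :=
  \sum_(s : state N) prob_state w s * ((has s sl)%:R + (1 - slot2_miss s)).

Hypotheses (uniq_slfl : uniq (sl ++ fl)) (k_le_fl : (k <= size fl)%N).

Lemma uniq_rank_list o : uniq (rank_list o).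
Proof.
apply: subseq_uniq uniq_slfl; apply: subseq_trans (take_subseq _ _) _.
exact: cat_subseq (filter_subseq _ _) (subseq_refl _).
Qed.

Lemma card_rank_rule o : #|rank_rule o| = k.
Proof.
have /card_uniqP uniq_card := uniq_rank_list o.
rewrite cardsE uniq_card size_takel //.
by rewrite size_cat (leq_trans k_le_fl) ?leq_addl.
Qed.

Variable A : {set 'I_N}.
Hypotheses (A_sl : A = [set i in sl]) (size_slfl : size (sl ++ fl) = N).
Hypotheses (size_sl : size sl = k) (p11_le_p01 : p11 <= p01).
Hypothesis w_prob : forall i, 0 <= w i <= 1.
Hypothesis sorted_fl : sorted (fun i j => w i <= w j) fl.

Lemma mem_slfl i : i \in sl ++ fl.
Proof.
have /card_uniqP uniq_card := uniq_slfl.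
have /subset_cardP : #|sl ++ fl| = #|'I_N| by rewrite card_ord uniq_card.
by move/(_ (subset_predT _)) => ->.
Qed.

Lemma notin_sl i : i \in fl -> i \notin sl.
Proof. by move: uniq_slfl; rewrite cat_uniq => /and3P[_ /hasPn ifl _] /ifl. Qed.

Lemma rank_list_observe s :
  rank_list (observe A s) = take k ([seq i <- sl | ~~ s i] ++ fl).
Proof.
congr (take k (_ ++ fl)); apply: eq_in_filter => i isl.
by rewrite ffunE A_sl inE isl; case: (s i).
Qed.

Section Posterior.
Variable s : state N.
Local Notation u := (update p01 p11 w A s).

Lemma update_le_p01 j : u j <= p01.
Proof.
rewrite /update; case: ifP => _; first by case: (s j); rewrite ?lexx.
by apply: tau_le_p01; case/andP: (w_prob j).
Qed.

Lemma update_busy i : i \in [seq i <- sl | ~~ s i] -> u i = p01.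
Proof. by rewrite mem_filter /u /update A_sl inE => /andP[/negbTE -> ->]. Qed.

Lemma update_idle i : i \in sl -> s i -> u i = p11.
Proof. by rewrite /update A_sl inE => -> ->. Qed.

Lemma update_fl i : i \in fl -> u i = tau p01 p11 (w i).
Proof. by move=> ifl; rewrite /update A_sl inE (negbTE (notin_sl ifl)). Qed.

Lemma rank_rule_topk : topk k u (rank_rule (observe A s)).
Proof.
split; first exact: card_rank_rule.
set busy := [seq i <- sl | ~~ s i].
have busy_le : (size busy <= k)%N by rewrite size_filter -size_sl count_size.
rewrite /rank_rule rank_list_observe take_cat ifF; last by rewrite ltnNge busy_le.
move=> i j.
rewrite !inE !mem_cat negb_or => /orP[ibusy|itake] /andP[jNbusy jNtake].
  by rewrite (update_busy ibusy) update_le_p01.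
have ifl := mem_take itake; rewrite (update_fl ifl).
have [jsl|jNsl] := boolP (j \in sl).
  have sj : s j by apply: contraNT jNbusy; rewrite mem_filter jsl andbT.
  by rewrite (update_idle jsl sj) p11_le_tau //; case/andP: (w_prob i).
have jfl : j \in fl by move: (mem_slfl j); rewrite mem_cat (negbTE jNsl).
rewrite (update_fl jfl) tau_le_tau //; apply: (sorted_take_drop _ sorted_fl itake).
  by move=> ? ? ?; apply: le_trans.
move: jfl; rewrite -[fl in j \in fl](cat_take_drop (k - size busy)) mem_cat.
by rewrite (negbTE jNtake).
Qed.

Lemma exp_reward_rank_rule : exp_reward u (rank_rule (observe A s)) = 1 - slot2_miss s.
Proof.
rewrite /exp_reward /rank_rule /slot2_miss; congr (1 - _).
rewrite (eq_bigl (mem (rank_list (observe A s)))); last by move=> i; rewrite inE.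
rewrite -big_uniq ?uniq_rank_list // rank_list_observe.
have -> : [seq 1 - p01 | i <- sl & ~~ s i] = [seq 1 - u i | i <- sl & ~~ s i].
  by apply/eq_in_map => i ibusy; rewrite update_busy.
have -> : [seq 1 - tau p01 p11 (w i) | i <- fl] = [seq 1 - u i | i <- fl].
  by apply/eq_in_map => i ifl; rewrite update_fl.
by rewrite -map_cat -map_take big_map.
Qed.

Lemma exists_sensed_idle : [exists i in A, s i] = has s sl.
Proof.
apply/existsP/hasP => [[i /andP[iA si]]|[i isl si]]; exists i => //.
  by move: iA; rewrite A_sl inE.
by rewrite A_sl inE isl.
Qed.

End Posterior.

Lemma rank_rule_topk_rule : topk_rule k p01 p11 w A rank_rule.
Proof. by split; [exact: card_rank_rule | exact: rank_rule_topk]. Qed.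

Lemma value_topk_rank f :
  topk_rule k p01 p11 w A f -> value p01 p11 w A f = rank_value.
Proof.
move=> topf; rewrite (value_topk_rule topf rank_rule_topk_rule).
by apply: eq_bigr => s _; rewrite exp_reward_rank_rule exists_sensed_idle.
Qed.

End RankRule.

Definition c1 : 'I_6 := @Ordinal 6 0 isT.
Definition c2 : 'I_6 := @Ordinal 6 1 isT.
Definition c3 : 'I_6 := @Ordinal 6 2 isT.
Definition c4 : 'I_6 := @Ordinal 6 3 isT.
Definition c5 : 'I_6 := @Ordinal 6 4 isT.
Definition c6 : 'I_6 := @Ordinal 6 5 isT.

Lemma ch_ord k (lt_k6 : (k < 6)%N) : ch k.+1 = Ordinal lt_k6.
Proof. by apply: val_inj; rewrite /= inordK. Qed.

Lemma A123E : A123 = [set i in [:: c1; c2; c3]].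
Proof. by apply/setP => i; rewrite /A123 !ch_ord !inE orbA. Qed.

Lemma A124E : A124 = [set i in [:: c1; c2; c4]].
Proof. by apply/setP => i; rewrite /A124 !ch_ord !inE orbA. Qed.

Lemma w0_prob i : 0 <= w0 i <= 1.
Proof.
rewrite /w0; case: i => [[|[|[|[|[|[|m]]]]]] ?]; cbn [nth nat_of_ord]; rewrite ?nth_nil.
all: by apply/andP; split; lra.
Qed.

Lemma card_A123 : #|A123| = 3.
Proof. by rewrite A123E cardsE; apply/card_uniqP. Qed.

Lemma A123_separated i j : i \in A123 -> j \notin A123 -> w0 j < w0 i.
Proof.
have := mem_slfl (sl := [:: c1; c2; c3]) (fl := [:: c5; c6; c4]) erefl erefl j.
rewrite mem_cat A123E => /orP[jsl|jfl] iA jNA; first by rewrite inE jsl in jNA.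
move: iA jfl; rewrite !inE => /or3P[]/eqP-> /or3P[]/eqP->.
all: by rewrite /w0; cbn [nth nat_of_ord c1 c2 c3 c4 c5 c6]; lra.
Qed.

Definition bits (l : seq bool) : state 6 := [ffun i : 'I_6 => nth false l i].

Fixpoint sum_bits (n : nat) (F : seq bool -> rat) : rat :=
  if n is n'.+1 then
    sum_bits n' (fun l => F (true :: l)) + sum_bits n' (fun l => F (false :: l))
  else F [::].

Lemma eq_sum_bits n (F G : seq bool -> rat) : F =1 G -> sum_bits n F = sum_bits n G.
Proof.
elim: n F G => [|n IHn] F G FG /=; first exact: FG.
by congr (_ + _); apply: IHn => l; apply: FG.
Qed.

Lemma sum_pair_bool (J : finType) (G : bool * J -> rat) :
  \sum_(p : bool * J) G p = \sum_(y : J) G (true, y) + \sum_(y : J) G (false, y).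
Proof.
rewrite (eq_bigr (fun p => (fun b y => G (b, y)) p.1 p.2)); last by case.
by rewrite -(pair_bigA _ (fun b y => G (b, y))) big_bool.
Qed.

Lemma sum_state6 (F : state 6 -> rat) :
  \sum_(s : state 6) F s = sum_bits 6 (fun l => F (bits l)).
Proof.
pose list6 (t : bool * (bool * (bool * (bool * (bool * bool))))) :=
  let: (b1, (b2, (b3, (b4, (b5, b6))))) := t in [:: b1; b2; b3; b4; b5; b6].
rewrite (reindex (fun t => bits (list6 t))); last first.
  exists (fun s : state 6 => (s c1, (s c2, (s c3, (s c4, (s c5, s c6)))))) => [t _|s _].
    by case: t => b1 [b2 [b3 [b4 [b5 b6]]]]; rewrite !ffunE.
  apply/ffunP => -[[|[|[|[|[|[|m]]]]]] lt_m6] //; rewrite ffunE; congr (s _); exact: val_inj.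
by rewrite !sum_pair_bool !big_bool.
Qed.

Lemma prob_state_bits l :
  prob_state w0 (bits l) =
  foldr (fun (i : 'I_6) p => (if nth false l i then w0 i else 1 - w0 i) * p) 1
        [:: c1; c2; c3; c4; c5; c6].
Proof. by rewrite /prob_state !big_ord_recl big_ord0 !ffunE. Qed.

Lemma rank_value_bits k p01 p11 (sl fl : seq 'I_6) :
  rank_value k p01 p11 w0 sl fl =
  sum_bits 6 (fun l =>
    foldr (fun (i : 'I_6) p => (if nth false l i then w0 i else 1 - w0 i) * p) 1
          [:: c1; c2; c3; c4; c5; c6] *
    ((has (fun i : 'I_6 => nth false l i) sl)%:R
     + (1 - foldr *%R 1 (take k ([seq 1 - p01 | i : 'I_6 <- sl & ~~ nth false l i]
                                 ++ [seq 1 - tau p01 p11 (w0 i) | i <- fl]))))).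
Proof.
rewrite /rank_value sum_state6; apply: eq_sum_bits => l.
have bitsE : bits l =1 (fun i : 'I_6 => nth false l i) by move=> i; rewrite ffunE.
rewrite prob_state_bits /slot2_miss foldrE (eq_has bitsE).
by rewrite (eq_filter (a2 := fun i : 'I_6 => ~~ nth false l i)) // => i; rewrite bitsE.
Qed.

Lemma rank_value_lt :
  rank_value 3 p01_0 p11_0 w0 [:: c1; c2; c3] [:: c5; c6; c4] <
  rank_value 3 p01_0 p11_0 w0 [:: c1; c2; c4] [:: c5; c6; c3].
Proof.
rewrite !rank_value_bits.
cbv beta iota zeta delta [sum_bits foldr has filter map take cat nth nat_of_ord
  c1 c2 c3 c4 c5 c6 orb negb nat_of_bool w0 tau p01_0 p11_0].
lra.
Qed.

Lemma value_sensing123 g : topk_rule 3 p01_0 p11_0 w0 A123 g ->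
  value p01_0 p11_0 w0 A123 g = rank_value 3 p01_0 p11_0 w0 [:: c1; c2; c3] [:: c5; c6; c4].
Proof. by move=> top_g; apply: value_topk_rank => //; [exact: A123E | exact: w0_prob]. Qed.

Lemma value_sensing124 f : topk_rule 3 p01_0 p11_0 w0 A124 f ->
  value p01_0 p11_0 w0 A124 f = rank_value 3 p01_0 p11_0 w0 [:: c1; c2; c4] [:: c5; c6; c3].
Proof. by move=> top_f; apply: value_topk_rank => //; [exact: A124E | exact: w0_prob]. Qed.

Definition rule124 : obs 6 -> {set 'I_6} := rank_rule 3 [:: c1; c2; c4] [:: c5; c6; c3].

Lemma rule124_topk_rule : topk_rule 3 p01_0 p11_0 w0 A124 rule124.
Proof. by apply: rank_rule_topk_rule => //; [exact: A124E | exact: w0_prob]. Qed.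

Lemma rule124_policy : is_policy 3 A124 rule124.
Proof.
split; first by rewrite A124E cardsE; apply/card_uniqP.
by move=> o; apply: card_rank_rule.
Qed.

Theorem mainTheorem5 :
  (forall f g : obs 6 -> {set 'I_6},
     topk_rule 3 p01_0 p11_0 w0 A124 f ->
     myopic 3 p01_0 p11_0 w0 A123 g ->
     value p01_0 p11_0 w0 A123 g < value p01_0 p11_0 w0 A124 f)
  /\ (forall (A : {set 'I_6}) (g : obs 6 -> {set 'I_6}),
        myopic 3 p01_0 p11_0 w0 A g -> ~ optimal 3 p01_0 p11_0 w0 A g).
Proof.
have better f g : topk_rule 3 p01_0 p11_0 w0 A124 f -> myopic 3 p01_0 p11_0 w0 A123 g ->
    value p01_0 p11_0 w0 A123 g < value p01_0 p11_0 w0 A124 f.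
  move=> top_f [_ top_g].
  by rewrite (value_sensing123 top_g) (value_sensing124 top_f) rank_value_lt.
split=> // A g myopic_g [_ opt].
have [[cardA topA] _] := myopic_g.
have eA : A = A123 by apply: top_set_eq topA A123_separated; rewrite cardA card_A123.
subst A.
by move: (opt _ _ rule124_policy); rewrite leNgt (better _ _ rule124_topk_rule myopic_g).
Qed.
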